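(* Let $a<b$ be real numbers and let $n\ge 1$. There are infinitely many pairwise nonisomorphic nontrivial topological quandle structures on the closed interval $[a,b]$, and there are infinitely many pairwise nonisomorphic nontrivial topological quandle structures on the open unit ball $B^{\circ}=\{x\in\mathbb{R}^n:\|x\|<1\}$.
   Context: A topological quandle is a topological space $X$ with a continuous map $f:X\times X\to X$ such that for every $y\in X$ the map $R_y:X\to X$, $x\mapsto f(x,y)$, is a homeomorphism, $f(f(x,y),z)=f(f(x,z),f(y,z))$ for all $x,y,z\in X$, and $f(x,x)=x$ for all $x\in X$. The structure is trivial if $f(x,y)=x$ for all $x,y$, and nontrivial otherwise. Two topological quandle structures $f_1,f_2$ on spaces $X_1,X_2$ are isomorphic if there is a homeomorphism $\varphi:X_1\to X_2$ with $\varphi(f_1(x,y))=f_2(\varphi(x),\varphi(y))$ for all $x,y\in X_1$. *)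

From HB Require Import structures.
From mathcomp Require Import all_boot all_order all_algebra.
From mathcomp Require Import all_classical all_reals all_analysis.
Set Implicit Arguments. Unset Strict Implicit. Unset Printing Implicit Defensive.
Import Order.TTheory GRing.Theory Num.Theory.
Import numFieldNormedType.Exports.
Local Open Scope classical_set_scope.
Local Open Scope ring_scope.

(* A topological quandle structure on the subspace X of a topological space T.
   The operation is given by f : T -> T -> T; only its values on X * X matter. *)
Definition is_top_quandle {T : topologicalType} (X : set T) (f : T -> T -> T) : Prop :=
  [/\ (forall x y, X x -> X y -> X (f x y)),
      {within X `*` X, continuous (fun p : T * T => f p.1 p.2)},
      (forall y, X y ->
         {within X, continuous (fun x => f x y)} /\
         exists g : T -> T,
           [/\ (forall x, X x -> X (g x)),
               (forall x, X x -> g (f x y) = x),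
               (forall x, X x -> f (g x) y = x) &
               {within X, continuous g}]),
      (forall x y z, X x -> X y -> X z -> f (f x y) z = f (f x z) (f y z)) &
      (forall x, X x -> f x x = x)].

Definition nontrivial_quandle {T : Type} (X : set T) (f : T -> T -> T) : Prop :=
  exists x y, X x /\ X y /\ f x y <> x.

Definition quandle_iso {T1 T2 : topologicalType} (X1 : set T1) (f1 : T1 -> T1 -> T1)
    (X2 : set T2) (f2 : T2 -> T2 -> T2) : Prop :=
  exists (phi : T1 -> T2) (psi : T2 -> T1),
    [/\ (forall x, X1 x -> X2 (phi x)),
        (forall y, X2 y -> X1 (psi y)),
        (forall x, X1 x -> psi (phi x) = x),
        (forall y, X2 y -> phi (psi y) = y) &
        {within X1, continuous phi}] /\
    {within X2, continuous psi} /\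
    (forall x y, X1 x -> X1 y -> phi (f1 x y) = f2 (phi x) (phi y)).

Definition infinitely_many_nontrivial_top_quandles {T : topologicalType} (X : set T) : Prop :=
  exists F : nat -> T -> T -> T,
    (forall i, is_top_quandle X (F i) /\ nontrivial_quandle X (F i)) /\
    (forall i j, i <> j -> ~ quandle_iso X (F i) X (F j)).

(* Open Euclidean unit ball in R^n (row vectors, product topology). *)
Definition open_unit_ball (R : realType) (n : nat) : set 'rV[R]_n :=
  [set x | \sum_(i < n) (x ord0 i) ^+ 2 < 1].
Arguments open_unit_ball : clear implicits.

From HB Require Import structures.
From mathcomp Require Import all_boot all_order all_algebra.
From mathcomp Require Import all_classical all_reals all_analysis.
From mathcomp Require Import ring lra.
Set Implicit Arguments.
Unset Strict Implicit.
Unset Printing Implicit Defensive.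

Import Order.TTheory GRing.Theory Num.Theory.
Import numFieldNormedType.Exports.
Local Open Scope classical_set_scope.
Local Open Scope ring_scope.

(* A continuous action (r, x) |-> flow r x of (R, +) together with a continuous
   flow-invariant time t such that flow (t x) x = x yields the topological quandle
   x * y = flow (t y) x. On the interval and on the ball we let the flow dilate the
   region sqnorm < 1 radially, the squared radius following the logistic equation,
   and fix everything else; the time depends only on sqnorm, vanishes where
   sqnorm <= 1 and ranges over [-A, 1]. As the flow is faithful, the right
   translations are exactly the flows by times in [-A, 1]. Hence some right
   translation R_y has a square that is no right translation while R_y^M is inverse
   to one iff some r in [-A, 1] has 2r outside and -M r inside [-A, 1]. For
   M = 2^(i+1) this holds when A = 2^j with j > i and fails when A = 2^i, so the
   quandles for A = 2^i are pairwise nonisomorphic. *)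

Definition rtrans {T : Type} (f : T -> T -> T) (y x : T) : T := f x y.

Definition is_rtrans {T : Type} (X : set T) (f : T -> T -> T) (g : T -> T) : Prop :=
  exists2 w, X w & forall x, X x -> f x w = g x.

Definition square_gap {T : Type} (M : nat) (X : set T) (f : T -> T -> T) : Prop :=
  exists2 y, X y &
    ~ is_rtrans X f (iter 2 (rtrans f y)) /\
    exists2 z, X z & forall x, X x -> rtrans f z (iter M (rtrans f y) x) = x.

Section IsoTransport.
Variables (T1 T2 : Type) (X1 : set T1) (X2 : set T2).
Variables (f1 : T1 -> T1 -> T1) (f2 : T2 -> T2 -> T2) (phi : T1 -> T2) (psi : T2 -> T1).
Hypothesis f1X : forall {x y}, X1 x -> X1 y -> X1 (f1 x y).
Hypothesis phiX : forall {x}, X1 x -> X2 (phi x).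
Hypothesis psiX : forall {y}, X2 y -> X1 (psi y).
Hypothesis phiK : forall {x}, X1 x -> psi (phi x) = x.
Hypothesis psiK : forall {y}, X2 y -> phi (psi y) = y.
Hypothesis phi_morph : forall {x y}, X1 x -> X1 y -> phi (f1 x y) = f2 (phi x) (phi y).

Lemma psi_morph x y : X2 x -> X2 y -> psi (f2 x y) = f1 (psi x) (psi y).
Proof.
move=> Xx Xy; have [Xpx Xpy] := (psiX Xx, psiX Xy).
by rewrite -(psiK Xx) -(psiK Xy) -(phi_morph Xpx Xpy) !phiK ?psiK //; exact: f1X.
Qed.

Lemma iter_rtrans_morph k y x : X1 y -> X1 x ->
  X1 (iter k (rtrans f1 y) x) /\
  phi (iter k (rtrans f1 y) x) = iter k (rtrans f2 (phi y)) (phi x).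
Proof.
move=> Xy Xx; elim: k => [|k [Xk ek]] //=.
by split; [exact: f1X | rewrite /rtrans phi_morph // ek].
Qed.

Lemma is_rtrans_pullback g : is_rtrans X2 f2 g -> is_rtrans X1 f1 (fun x => psi (g (phi x))).
Proof.
case=> w Xw gw; exists (psi w) => [|x Xx]; first exact: psiX.
rewrite -gw; last exact: phiX.
by rewrite psi_morph ?phiK //; exact: phiX.
Qed.

Lemma square_gap_transport M : square_gap M X1 f1 -> square_gap M X2 f2.
Proof.
case=> y Xy [nsq [z Xz inv]]; exists (phi y); first exact: phiX.
split=> [sq|].
  apply: nsq; case: (is_rtrans_pullback sq) => w Xw gw; exists w => // x Xx.
  have [Xsq esq] := iter_rtrans_morph 2 Xy Xx.
  by rewrite gw // -esq phiK.
exists (phi z) => [|x Xx]; first exact: phiX.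
have [Xk ek] := iter_rtrans_morph M Xy (psiX Xx).
by rewrite psiK // in ek; rewrite /rtrans -ek -phi_morph // [f1 _ _]inv ?psiK //; exact: psiX.
Qed.

End IsoTransport.

Lemma quandle_iso_sym (T1 T2 : topologicalType) (X1 : set T1) (X2 : set T2)
    (f1 : T1 -> T1 -> T1) (f2 : T2 -> T2 -> T2) :
  (forall x y, X1 x -> X1 y -> X1 (f1 x y)) ->
  quandle_iso X1 f1 X2 f2 -> quandle_iso X2 f2 X1 f1.
Proof.
move=> f1X [phi [psi [[phiX psiX phiK psiK phi_cont] [psi_cont phi_morph]]]].
exists psi, phi; split; first by split.
by split=> // x y; exact: (psi_morph f1X psiX phiK psiK phi_morph).
Qed.

Lemma square_gap_iso (T1 T2 : topologicalType) (X1 : set T1) (X2 : set T2)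
    (f1 : T1 -> T1 -> T1) (f2 : T2 -> T2 -> T2) (M : nat) :
  (forall x y, X1 x -> X1 y -> X1 (f1 x y)) ->
  quandle_iso X1 f1 X2 f2 -> square_gap M X1 f1 -> square_gap M X2 f2.
Proof.
move=> f1X [phi [psi [[phiX psiX phiK psiK _] [_ phi_morph]]]].
exact: (square_gap_transport f1X phiX psiX phiK psiK phi_morph).
Qed.

Lemma pairwise_noniso_square_gap (T : topologicalType) (X : set T)
    (F : nat -> T -> T -> T) (M : nat -> nat) :
  (forall i x y, X x -> X y -> X (F i x y)) ->
  (forall i j, (i < j)%N -> square_gap (M i) X (F j)) ->
  (forall i, ~ square_gap (M i) X (F i)) ->
  forall i j, i <> j -> ~ quandle_iso X (F i) X (F j).
Proof.
move=> FX gap nogap i j /eqP; rewrite neq_ltn => /orP[ij|ji] iso.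
  exact/(nogap i)/(square_gap_iso (FX j) (quandle_iso_sym (FX i) iso))/gap.
exact/(nogap j)/(square_gap_iso (FX i) iso)/gap.
Qed.

Section FlowQuandle.
Variables (R : numFieldType) (T : topologicalType) (X : set T).
Variables (flow : R -> T -> T) (t : T -> R).
Hypothesis flow0 : forall x, flow 0 x = x.
Hypothesis flowD : forall r s x, flow s (flow r x) = flow (r + s) x.
Hypothesis flowX : forall r x, X x -> X (flow r x).
Hypothesis flow_continuous : continuous (fun p : R * T => flow p.1 p.2).
Hypothesis t_continuous : continuous t.
Hypothesis t_flow : forall r x, t (flow r x) = t x.
Hypothesis flow_t : forall x, flow (t x) x = x.

Definition flow_op (x y : T) : T := flow (t y) x.

Lemma flow_continuous_r r : continuous (flow r).
Proof.
move=> x; apply: (continuous_comp (f := pair r) (g := fun p => flow p.1 p.2)).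
  exact: (cvg_pair (cvg_cst r) cvg_id).
exact: flow_continuous.
Qed.

Lemma flow_op_quandle : is_top_quandle X flow_op.
Proof.
split.
- by move=> x y Xx _; exact: flowX.
- apply: continuous_subspaceT => p.
  apply: (continuous_comp (f := fun p : T * T => (t p.2, p.1))
                          (g := fun p => flow p.1 p.2)); last exact: flow_continuous.
  have t2_continuous : continuous (fun p : T * T => t p.2).
    by move=> q; apply: continuous_comp; [exact: cvg_snd | exact: t_continuous].
  exact: (cvg_pair (t2_continuous p) cvg_fst).
- move=> y Xy; split; first exact/continuous_subspaceT/flow_continuous_r.
  exists (flow (- t y)); split=> [x Xx|x _|x _|]; first exact: flowX.
  + by rewrite /flow_op flowD subrr flow0.
  + by rewrite /flow_op flowD addNr flow0.
  + exact/continuous_subspaceT/flow_continuous_r.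
- by move=> x y z _ _ _; rewrite /flow_op t_flow !flowD addrC.
- by move=> x _; exact: flow_t.
Qed.

Lemma iter_flow_op k y x : iter k (rtrans flow_op y) x = flow (t y *+ k) x.
Proof.
elim: k => [|k IHk] /=; first by rewrite flow0.
by rewrite /rtrans IHk /flow_op flowD mulrS addrC.
Qed.

Hypothesis flow_faithful : forall r, (forall x, X x -> flow r x = x) -> r = 0.

Lemma flow_op_nontrivial : (exists2 y, X y & t y != 0) -> nontrivial_quandle X flow_op.
Proof.
case=> y Xy /eqP ty0; apply: contrapT => triv; apply/ty0/flow_faithful => x Xx.
by apply: contrapT => moved; apply: triv; exists x, y.
Qed.

Lemma is_rtrans_flow r : is_rtrans X flow_op (flow r) <-> (t @` X) r.
Proof.
split=> [[w Xw rw]|[w Xw <-]]; last by exists w.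
exists w => //; apply/eqP; rewrite -subr_eq0; apply/eqP/flow_faithful => x Xx.
by rewrite -flowD -[flow (t w) x]/(flow_op x w) rw // flowD subrr flow0.
Qed.

Lemma square_gap_flow_op M : square_gap M X flow_op <->
  exists2 r, (t @` X) r & ~ (t @` X) (r *+ 2) /\ (t @` X) (- (r *+ M)).
Proof.
have iter2 y : iter 2 (rtrans flow_op y) = flow (t y *+ 2).
  by apply: funext => x; rewrite iter_flow_op.
split=> [[y Xy [nsq [z Xz inv]]]|[_ [y Xy <-] [nsq [z Xz tz]]]].
  exists (t y); first by exists y.
  split=> [/is_rtrans_flow|]; first by rewrite -iter2.
  exists z => //; apply/eqP; rewrite -addr_eq0 addrC; apply/eqP/flow_faithful => x Xx.
  by rewrite -flowD -iter_flow_op [flow _ _]inv.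
exists y => //; split; first by rewrite iter2 => /is_rtrans_flow.
by exists z => // x _; rewrite /rtrans iter_flow_op /flow_op flowD tz addrN flow0.
Qed.

End FlowQuandle.

Section TimeInterval.
Variable R : realFieldType.

Lemma itv_square_gap_witness (A : R) (M : nat) : 1 <= A -> M%:R <= A ->
  exists2 r, r \in `[- A, 1] & r *+ 2 \notin `[- A, 1] /\ - (r *+ M) \in `[- A, 1].
Proof.
move=> A1 MA; exists 1; first by rewrite in_itv /=; apply/andP; split; lra.
split; first by apply/negP; rewrite in_itv /= mulr2n => /andP[_]; lra.
by rewrite in_itv /=; apply/andP; split; have := ler0n R M; lra.
Qed.

Lemma itv_no_square_gap (N : nat) (r : R) : (0 < N)%N ->
  r \in `[- N%:R, 1] -> - (r *+ N.*2) \in `[- N%:R, 1] -> r *+ 2 \in `[- N%:R, 1].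
Proof.
rewrite -(ler_nat R 1) !in_itv /= -[r *+ 2]mulr_natl -[r *+ N.*2]mulr_natl -mul2n natrM.
set A := N%:R; move=> A1 /andP[r_ge r_le] /andP[lo hi].
have A0 : 0 < A by lra.
have : A * (2 * r - 1) <= 0 by lra.
rewrite pmulr_rle0 // subr_le0 => r_half; rewrite r_half andbT.
case: (lerP 0 r) => r0; first lra.
have : 0 <= (A - 1) * - r by apply: mulr_ge0; lra.
lra.
Qed.

Definition tent (A w : R) : R :=
  Num.max (- A) (Num.min (2 * w) (1 - 4 * (A + 1) * (w - 2^-1))).

Lemma tent0 A : 0 <= A -> tent A 0 = 0.
Proof. by move=> A0; rewrite /tent mulr0 min_l ?max_r //; lra. Qed.

Lemma tent_itv A w : 0 <= A -> tent A w \in `[- A, 1].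
Proof.
move=> A0; rewrite in_itv /= le_max lexx /= ge_max ge_min.
have -> : - A <= 1 by lra.
case: (lerP w 2^-1) => w_half; first by rewrite (_ : 2 * w <= 1) //; lra.
suff : 0 <= 4 * (A + 1) * (w - 2^-1) by move=> ?; apply/orP; right; lra.
by apply: mulr_ge0; lra.
Qed.

Lemma tent_onto A s : 0 <= A -> s \in `[- A, 1] -> exists2 w, 0 <= w <= 1 & tent A w = s.
Proof.
rewrite in_itv /= => A0 /andP[s_ge s_le]; rewrite /tent.
have A1 : 0 < A + 1 by lra.
case: (lerP 0 s) => s0.
  exists (s / 2); first by apply/andP; split; lra.
  have : 0 <= 4 * (A + 1) * (2^-1 - s / 2) by apply: mulr_ge0; lra.
  by move=> ?; rewrite min_l ?max_r; lra.
pose d := (1 - s) / (4 * (A + 1)).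
have d_ge0 : 0 <= d by apply: divr_ge0; lra.
have d_le : d <= 4^-1 by rewrite ler_pdivrMr; lra.
have dE : 4 * (A + 1) * d = 1 - s by rewrite /d; field; lra.
exists (2^-1 + d); first by apply/andP; split; lra.
by rewrite addrAC subrr add0r dE min_r ?max_r; lra.
Qed.

Lemma tent_continuous A : continuous (tent A).
Proof.
apply: max_fun_continuous; first exact: cst_continuous.
apply: min_fun_continuous => w; first by apply: cvgM; [exact: cvg_cst | exact: cvg_id].
apply: cvgB; first exact: cvg_cst.
by apply: cvgM; [exact: cvg_cst | apply: cvgB; [exact: cvg_id | exact: cvg_cst]].
Qed.

End TimeInterval.

Section Logistic.
Variable R : realType.
Implicit Types r s m : R.

(* [logistic r] is the time-r map of m' = m (1 - m) on [0, 1]; dilating by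
   [radial_factor r m] turns the squared radius m into [logistic r m]. *)
Definition logistic_den r m : R := 1 + (expR r - 1) * m.

Definition logistic r m : R := expR r * m / logistic_den r m.

Definition radial_factor r m : R := Num.sqrt (expR r / logistic_den r m).

Lemma logistic_den_gt0 r m : 0 <= m <= 1 -> 0 < logistic_den r m.
Proof.
move=> /andP[m0 m1]; rewrite /logistic_den.
have [m_pos|m_le0] := ltrP 0 m.
  have em : 0 < expR r * m by rewrite mulr_gt0 // expR_gt0.
  lra.
have -> : m = 0 by apply/eqP; rewrite eq_le m_le0 m0.
by rewrite mulr0 addr0.
Qed.

Lemma logistic_itv r m : 0 <= m <= 1 -> 0 <= logistic r m <= 1.
Proof.
move=> m01; have d0 := logistic_den_gt0 r m01; have e0 := expR_gt0 r.
case/andP: m01 => m0 m1; have em : 0 <= expR r * m by rewrite mulr_ge0 // ltW.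
rewrite /logistic divr_ge0 ?(ltW d0) //= ler_pdivrMr // mul1r /logistic_den.
lra.
Qed.

Lemma logistic_lt1 r m : 0 <= m < 1 -> logistic r m < 1.
Proof.
case/andP=> m0 m1; have m01 : 0 <= m <= 1 by rewrite m0 ltW.
by rewrite /logistic ltr_pdivrMr ?logistic_den_gt0 // mul1r /logistic_den; lra.
Qed.

Lemma logistic_r1 r : logistic r 1 = 1.
Proof.
by rewrite /logistic /logistic_den !mulr1 addrC subrK divff // expR_eq0.
Qed.

Lemma logistic_fixed r m : 0 < m < 1 -> logistic r m = m -> r = 0.
Proof.
case/andP=> m0 m1; have m01 : 0 <= m <= 1 by rewrite ltW // ltW.
move/(congr1 (fun v => v * logistic_den r m)).
rewrite /logistic divfK ?gt_eqF ?logistic_den_gt0 // /logistic_den => e.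
have : (expR r - 1) * (m * (1 - m)) = 0 by lra.
move/eqP; rewrite mulf_eq0 => /orP[|/eqP mm0].
  by rewrite subr_eq0 -expR0 => /eqP/expR_inj.
have : 0 < m * (1 - m) by rewrite mulr_gt0 // subr_gt0.
by rewrite mm0 ltxx.
Qed.

Lemma radial_factor_sq r m : 0 <= m <= 1 -> radial_factor r m ^+ 2 * m = logistic r m.
Proof.
move=> m01; rewrite sqr_sqrtr; first by rewrite mulrAC.
by rewrite divr_ge0 // ltW ?expR_gt0 ?logistic_den_gt0.
Qed.

Lemma radial_factor0 m : radial_factor 0 m = 1.
Proof.
by rewrite /radial_factor /logistic_den expR0 subrr mul0r addr0 divr1 sqrtr1.
Qed.

Lemma radial_factor_r1 r : radial_factor r 1 = 1.
Proof.
by rewrite /radial_factor /logistic_den mulr1 addrC subrK divff ?sqrtr1 ?expR_eq0.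
Qed.

Lemma logistic_denD r s m : 0 <= m <= 1 ->
  logistic_den s (logistic r m) = logistic_den (r + s) m / logistic_den r m.
Proof.
move=> m01; have := logistic_den_gt0 r m01; rewrite /logistic /logistic_den expRD => d0.
by field; rewrite gt_eqF.
Qed.

Lemma radial_factorD r s m : 0 <= m <= 1 ->
  radial_factor s (logistic r m) * radial_factor r m = radial_factor (r + s) m.
Proof.
move=> m01; have d0 := logistic_den_gt0 r m01.
have d1 := logistic_den_gt0 s (logistic_itv r m01).
rewrite /radial_factor -sqrtrM ?divr_ge0 ?ltW ?expR_gt0 //; congr Num.sqrt.
have := logistic_den_gt0 (r + s) m01; rewrite logistic_denD // expRD => d2.
by field; rewrite !gt_eqF.
Qed.

Lemma radial_factor_continuous (U : topologicalType) (g h : U -> R) :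
  continuous g -> continuous h -> (forall u, 0 <= h u <= 1) ->
  continuous (fun u => radial_factor (g u) (h u)).
Proof.
move=> g_cont h_cont h01 u.
apply: (continuous_comp (f := fun u => expR (g u) / logistic_den (g u) (h u)));
  last exact: sqrt_continuous.
have expg_cont : {for u, continuous (fun u => expR (g u))}.
  by apply: continuous_comp; [exact: g_cont | exact: continuous_expR].
apply: cvgM => //; apply: cvgV; first by rewrite gt_eqF ?logistic_den_gt0.
apply: cvgD; first exact: cvg_cst.
by apply: cvgM; [apply: cvgB; [exact: expg_cont | exact: cvg_cst] | exact: h_cont].
Qed.

End Logistic.

Section RadialFlow.
Variables (R : realType) (T : topologicalType) (X : set T).
Variables (dilate : R -> T -> T) (sqnorm : T -> R).
Hypothesis dilate1 : forall x, dilate 1 x = x.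
Hypothesis dilateM : forall k l x, dilate k (dilate l x) = dilate (k * l) x.
Hypothesis sqnorm_ge0 : forall x, 0 <= sqnorm x.
Hypothesis sqnorm_dilate : forall k x, sqnorm (dilate k x) = k ^+ 2 * sqnorm x.
Hypothesis sqnorm_le1_in : forall x, sqnorm x <= 1 -> X x.
Hypothesis sqnorm_onto : forall s, 0 <= s <= 2 -> exists2 x, X x & sqnorm x = s.
Hypothesis dilate_continuous : continuous (fun p : R * T => dilate p.1 p.2).
Hypothesis sqnorm_continuous : continuous sqnorm.

Definition capped_sqnorm x := Num.min (sqnorm x) 1.

Definition radial_flow r x := dilate (radial_factor r (capped_sqnorm x)) x.

Definition radial_time A x := tent A (Num.max (sqnorm x - 1) 0).

Definition radial_op A := flow_op radial_flow (radial_time A).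

Lemma capped_sqnorm_itv x : 0 <= capped_sqnorm x <= 1.
Proof. by rewrite le_min sqnorm_ge0 ler01 ge_min lexx orbT. Qed.

Lemma radial_flow_out r x : 1 <= sqnorm x -> radial_flow r x = x.
Proof. by move=> x_out; rewrite /radial_flow /capped_sqnorm min_r // radial_factor_r1 dilate1. Qed.

Lemma sqnorm_radial_flow r x : sqnorm x <= 1 -> sqnorm (radial_flow r x) = logistic r (sqnorm x).
Proof.
move=> x_in; have capE : capped_sqnorm x = sqnorm x by rewrite /capped_sqnorm min_l.
by rewrite /radial_flow sqnorm_dilate capE radial_factor_sq // sqnorm_ge0.
Qed.

Lemma capped_sqnorm_radial_flow r x :
  capped_sqnorm (radial_flow r x) = logistic r (capped_sqnorm x).
Proof.
have [x_out|x_in] := lerP 1 (sqnorm x).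
  by rewrite radial_flow_out // /capped_sqnorm min_r // logistic_r1.
have x01 : 0 <= sqnorm x < 1 by rewrite sqnorm_ge0.
rewrite /capped_sqnorm sqnorm_radial_flow ?ltW // !min_l ?ltW //.
exact: logistic_lt1.
Qed.

Lemma radial_flow0 x : radial_flow 0 x = x.
Proof. by rewrite /radial_flow radial_factor0 dilate1. Qed.

Lemma radial_flowD r s x : radial_flow s (radial_flow r x) = radial_flow (r + s) x.
Proof.
rewrite {1}/radial_flow capped_sqnorm_radial_flow /radial_flow dilateM.
by rewrite radial_factorD // capped_sqnorm_itv.
Qed.

Lemma radial_flowX r x : X x -> X (radial_flow r x).
Proof.
move=> Xx; have [x_out|x_in] := lerP 1 (sqnorm x); first by rewrite radial_flow_out.
apply/sqnorm_le1_in/ltW; rewrite sqnorm_radial_flow ?ltW //.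
by apply: logistic_lt1; rewrite sqnorm_ge0.
Qed.

Lemma radial_flow_continuous : continuous (fun p : R * T => radial_flow p.1 p.2).
Proof.
have capped_continuous : continuous capped_sqnorm.
  by apply: min_fun_continuous => //; exact: cst_continuous.
have factor_continuous : continuous (fun p : R * T => radial_factor p.1 (capped_sqnorm p.2)).
  apply: radial_factor_continuous => [p|p|p]; first exact: cvg_fst.
    by apply: continuous_comp; [exact: cvg_snd | exact: capped_continuous].
  exact: capped_sqnorm_itv.
move=> p; apply: (continuous_comp (f := fun p : R * T => (radial_factor p.1 (capped_sqnorm p.2), p.2))
                                 (g := fun p => dilate p.1 p.2)); last exact: dilate_continuous.
exact: (cvg_pair (factor_continuous p) cvg_snd).
Qed.

Lemma radial_time_continuous A : continuous (radial_time A).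
Proof.
move=> x; apply: (continuous_comp (f := fun x => Num.max (sqnorm x - 1) 0) (g := tent A));
  last exact: tent_continuous.
apply: (max_fun_continuous (f := fun x => sqnorm x - 1)); last exact: cst_continuous.
by move=> y; apply: cvgB; [exact: sqnorm_continuous | exact: cvg_cst].
Qed.

Lemma radial_time_in A x : 0 <= A -> sqnorm x <= 1 -> radial_time A x = 0.
Proof.
by move=> A0 x_in; rewrite /radial_time max_r ?subr_le0 // tent0.
Qed.

Lemma radial_time_flow A r x : 0 <= A -> radial_time A (radial_flow r x) = radial_time A x.
Proof.
move=> A0; have [x_out|x_in] := lerP 1 (sqnorm x); first by rewrite radial_flow_out.
have x01 : 0 <= sqnorm x <= 1 by rewrite sqnorm_ge0 ltW.
rewrite !radial_time_in ?(ltW x_in) // sqnorm_radial_flow ?(ltW x_in) //.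
by case/andP: (logistic_itv r x01).
Qed.

Lemma radial_flow_time A x : 0 <= A -> radial_flow (radial_time A x) x = x.
Proof.
move=> A0; have [x_out|x_in] := lerP 1 (sqnorm x); first by rewrite radial_flow_out.
by rewrite radial_time_in ?radial_flow0 // ltW.
Qed.

Lemma radial_flow_faithful r : (forall x, X x -> radial_flow r x = x) -> r = 0.
Proof.
move=> fixed; have half01 : 0 < (2^-1 : R) < 1 by apply/andP; split; lra.
have [x Xx x_half] : exists2 x, X x & sqnorm x = 2^-1 by apply: sqnorm_onto; lra.
apply: (logistic_fixed half01); rewrite -x_half -sqnorm_radial_flow; last by lra.
by rewrite fixed.
Qed.

Lemma image_radial_time A : 0 <= A -> radial_time A @` X = `[- A, 1]%classic.
Proof.
move=> A0; apply/seteqP; split=> [_ [x _ <-]|s /= s_in]; first exact: tent_itv.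
have [w /andP[w0 w1] <-] := tent_onto A0 s_in.
have [x Xx xE] : exists2 x, X x & sqnorm x = 1 + w by apply: sqnorm_onto; lra.
by exists x => //; rewrite /radial_time xE addrAC subrr add0r max_l.
Qed.

Lemma radial_quandle A : 0 <= A -> is_top_quandle X (radial_op A).
Proof.
move=> A0; apply: (flow_op_quandle radial_flow0 radial_flowD radial_flowX).
- exact: radial_flow_continuous.
- exact: radial_time_continuous.
- by move=> r x; exact: radial_time_flow.
- by move=> x; exact: radial_flow_time.
Qed.

Lemma radial_nontrivial A : 0 <= A -> nontrivial_quandle X (radial_op A).
Proof.
move=> A0; apply: flow_op_nontrivial; first exact: radial_flow_faithful.
have : (radial_time A @` X) 1 by rewrite image_radial_time //= in_itv /= lexx andbT; lra.
by case=> y Xy ty; exists y; rewrite // ty oner_eq0.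
Qed.

Lemma radial_square_gapE A M : 0 <= A -> square_gap M X (radial_op A) <->
  exists2 r, r \in `[- A, 1] & r *+ 2 \notin `[- A, 1] /\ - (r *+ M) \in `[- A, 1].
Proof.
move=> A0; rewrite (square_gap_flow_op _ radial_flow0 radial_flowD radial_flow_faithful).
rewrite image_radial_time //=.
by split=> -[r r_in [/negP r2_out rM_in]]; exists r.
Qed.

Lemma radial_family : infinitely_many_nontrivial_top_quandles X.
Proof.
pose A i : R := (2 ^ i)%:R.
have A_ge1 i : 1 <= A i by rewrite (ler_nat R 1) expn_gt0.
exists (fun i => radial_op (A i)); split=> [i|].
  by split; [exact: radial_quandle | exact: radial_nontrivial].
apply: (@pairwise_noniso_square_gap _ _ _ (fun i => (2 ^ i).*2)) => [i x y Xx _|i j ij|i].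
- exact: radial_flowX.
- apply/radial_square_gapE => //; apply: itv_square_gap_witness => //.
  by rewrite ler_nat -mul2n -expnS leq_pexp2l.
- rewrite radial_square_gapE // => -[r r_in [/negP r2_out rM_in]].
  by apply: r2_out; apply: itv_no_square_gap; rewrite ?expn_gt0.
Qed.

End RadialFlow.

Lemma interval_family (R : realType) (a b : R) : a < b ->
  infinitely_many_nontrivial_top_quandles `[a, b].
Proof.
move=> ab; pose c := (a + b) / 2; pose L := b - a.
have L0 : 0 < L by rewrite subr_gt0.
apply: (@radial_family R R `[a, b] (fun k x => c + k * (x - c))
          (fun x => (4 * (x - c) / L) ^+ 2)).
- by move=> x; rewrite mul1r addrC subrK.
- by move=> k l x; ring.
- by move=> x; exact: sqr_ge0.
- by move=> k x; ring.
- move=> x; set d := 4 * (x - c) / L => d_le1.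
  have xE : x = c + d * L / 4 by rewrite /d; field; lra.
  have [d_ge d_le] : -1 <= d /\ d <= 1 by split; nra.
  have dL_ge : 0 <= (1 + d) * L by apply: mulr_ge0; lra.
  have dL_le : 0 <= (1 - d) * L by apply: mulr_ge0; lra.
  rewrite /= xE in_itv /=; rewrite /c /L in dL_ge dL_le *.
  by apply/andP; split; lra.
- move=> s /andP[s0 s2]; pose q := Num.sqrt s.
  have q0 : 0 <= q := sqrtr_ge0 s.
  have qs : q ^+ 2 = s := sqr_sqrtr s0.
  have q2 : q <= 2 by nra.
  have qL_ge : 0 <= q * L by apply: mulr_ge0; lra.
  have qL_le : 0 <= (2 - q) * L by apply: mulr_ge0; lra.
  exists (c + q * L / 4).
    by rewrite /= in_itv /= /c /L in qL_ge qL_le *; apply/andP; split; lra.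
  by rewrite -qs; congr (_ ^+ 2); field; lra.
- move=> p; apply: cvgD; first exact: cvg_cst.
  by apply: cvgM; [exact: cvg_fst | apply: cvgB; [exact: cvg_snd | exact: cvg_cst]].
- move=> x; apply: (continuous_comp (f := fun x => 4 * (x - c) / L) (g := fun r => r ^+ 2));
    last exact: exprn_continuous.
  apply: cvgM; last exact: cvg_cst.
  by apply: cvgM; [exact: cvg_cst | apply: cvgB; [exact: cvg_id | exact: cvg_cst]].
Qed.

Lemma ball_family (R : realType) (n : nat) : (0 < n)%N ->
  infinitely_many_nontrivial_top_quandles (open_unit_ball R n).
Proof.
move=> n_gt0; pose S (x : 'rV[R]_n) := \sum_(i < n) x ord0 i ^+ 2.
have S_ge0 x : 0 <= S x by apply: sumr_ge0 => i _; exact: sqr_ge0.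
apply: (@radial_family R _ (open_unit_ball R n) (fun k x => k *: x) (fun x => 4 * S x)).
- by move=> x; rewrite scale1r.
- by move=> k l x; rewrite scalerA.
- by move=> x; rewrite mulr_ge0.
- move=> k x; rewrite /S mulrCA; congr (_ * _); rewrite mulr_sumr.
  by apply: eq_bigr => i _; rewrite mxE exprMn.
- by move=> x; rewrite /open_unit_ball /= -/(S x); lra.
- move=> s /andP[s0 s2]; pose i0 : 'I_n := Ordinal n_gt0.
  pose x : 'rV[R]_n := \row_j (if j == i0 then Num.sqrt s / 2 else 0).
  have Sx : S x = s / 4.
    rewrite /S (bigD1 i0) //= big1 => [|j /negbTE ji0]; last by rewrite mxE ji0 expr0n.
    by rewrite mxE eqxx addr0 exprMn sqr_sqrtr //; field.
  by exists x; rewrite /open_unit_ball /= -/(S x) Sx; lra.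
- exact: scale_continuous.
- have S_continuous : continuous S.
    apply: continuous_big => [|i _ y]; first exact: add_continuous.
    apply: (continuous_comp (f := fun x : 'rV[R]_n => x ord0 i) (g := fun r => r ^+ 2));
      [exact: coord_continuous | exact: exprn_continuous].
  by move=> x; apply: (continuous_comp (S_continuous x)); exact: mulrl_continuous.
Qed.

Theorem mainTheorem2 (R : realType) (a b : R) (n : nat) :
  a < b -> (1 <= n)%N ->
  infinitely_many_nontrivial_top_quandles `[a, b] /\
  infinitely_many_nontrivial_top_quandles (open_unit_ball R n).
Proof. by move=> ab n_gt0; split; [exact: interval_family | exact: ball_family]. Qed.
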